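(* Let $A=\prod_{i=1}^n A_i$ where each $A_i$ is either $\mathsf P^1$ or $\mathbb F_2$, equipped with the product bicharacter. Let $\mathcal G,\mathcal M\subseteq A$ be subgroups (gauge group and measurement group) with $\mathcal G\subseteq\mathcal M^\perp$. Let $\Gamma\subseteq 2^{[n]}$ and let $P=\mathop{\ast}_{\gamma\in\Gamma}P_\gamma$ be a probability distribution on $A$, where each $P_\gamma$ is a probability distribution on $A$ with $P_\gamma(e)=0$ unless $\operatorname{supp}(e)\subseteq\gamma$. Suppose $P$ is correctable, meaning: (1) for all $\gamma_1,\gamma_2\in\Gamma$, $\gamma_1\cup\gamma_2$ is a correctable region, and (2) all moments $E(a)=\sum_{e\in A}\langle a,e\rangle P(e)$ are positive for all $a\in A$. Then the logical channel $P_L(e)=\frac{1}{|\mathcal G|}\sum_{s\in\mathcal G}P(es)$ is uniquely determined by the moments $E(s)$, $s\in\mathcal M$; i.e. any two correctable channels with the same $\Gamma$ whose moments agree on $\mathcal M$ have the same logical channel.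
   Context: $\mathsf P^1$ is the single-qubit Pauli group modulo phases, $\{I,X,Y,Z\}$, with bicharacter $\langle a,b\rangle=+1$ if $a,b$ commute and $-1$ otherwise; on $\mathbb F_2$ the bicharacter is $\langle x,y\rangle=(-1)^{xy}$. The product bicharacter on $A$ is $\langle a,b\rangle=\prod_i\langle a_i,b_i\rangle$. For a subgroup $B\subseteq A$, $B^\perp=\{a\in A:\langle a,b\rangle=1\ \forall b\in B\}$. The support of $a\in A$ is $\{i:a_i\neq I\}$ (identity element). A region $R\subseteq[n]$ is correctable if every $e\in\mathcal M^\perp$ with $\operatorname{supp}(e)\subseteq R$ lies in $\mathcal G$. Convolution: $(f\ast g)(a)=\sum_{b\in A}f(b)g(ab^{-1})$. *)

From HB Require Import structures.
From mathcomp Require Import all_boot all_order all_algebra.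
Set Implicit Arguments. Unset Strict Implicit. Unset Printing Implicit Defensive.
Import Order.TTheory GRing.Theory Num.Theory.
Local Open Scope ring_scope.

(* Single-site groups.  kind = true : P^1 (Pauli group mod phases), encoded
   as F_2^2 via  I=(0,0), X=(1,0), Z=(0,1), Y=(1,1);
   kind = false : F_2, encoded as bool. *)
Definition fac (b : bool) : finType :=
  if b then ((bool * bool)%type : finType) else (bool : finType).

Definition fac_mul (b : bool) : fac b -> fac b -> fac b :=
  if b as b' return fac b' -> fac b' -> fac b'
  then fun x y => (x.1 (+) y.1, x.2 (+) y.2)
  else fun x y => x (+) y.

Definition fac_one (b : bool) : fac b :=
  if b as b' return fac b' then (false, false) else false.

(* fac_anti x y = true iff <x,y> = -1 (anticommute / xy = 1 in F_2). *)
Definition fac_anti (b : bool) : fac b -> fac b -> bool :=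
  if b as b' return fac b' -> fac b' -> bool
  then fun x y => (x.1 && y.2) (+) (x.2 && y.1)
  else fun x y => x && y.

Definition grp (n : nat) (kind : 'I_n -> bool) : finType :=
  {dffun forall i : 'I_n, fac (kind i)}.

Section Ops.
Variables (n : nat) (kind : 'I_n -> bool).
Local Notation A := (grp kind).

Definition gmul (a b : A) : A := [ffun i => fac_mul (a i) (b i)].
Definition gone : A := [ffun i => fac_one (kind i)].
(* every element is an involution, so a^{-1} = a *)
Definition ginv (a : A) : A := a.

Definition ganti (a b : A) : bool := \big[addb/false]_(i < n) fac_anti (a i) (b i).
Definition bichar (R : nzRingType) (a b : A) : R := (-1) ^+ ganti a b.

Definition is_subgroup (S : {set A}) : Prop :=
  gone \in S /\ (forall a b, a \in S -> b \in S -> gmul a (ginv b) \in S).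

Definition perp (B : {set A}) : {set A} :=
  [set a | [forall b in B, ~~ ganti a b]].

Definition supp (a : A) : {set 'I_n} := [set i | a i != fac_one (kind i)].

Definition correctable_region (G M : {set A}) (Rg : {set 'I_n}) : Prop :=
  forall e, e \in perp M -> supp e \subset Rg -> e \in G.

Section Dist.
Variable R : realFieldType.

Definition is_prob (f : A -> R) : Prop :=
  (forall a, 0 <= f a) /\ \sum_(a : A) f a = 1.

Definition conv (f g : A -> R) : A -> R :=
  fun a => \sum_(b : A) f b * g (gmul a (ginv b)).

Definition delta1 : A -> R := fun a => if a == gone then 1 else 0.

Definition conv_family (Gamma : {set {set 'I_n}}) (Pg : {set 'I_n} -> A -> R)
  : A -> R := \big[conv/delta1]_(g in Gamma) Pg g.

Definition moment (P : A -> R) (a : A) : R := \sum_(e : A) bichar R a e * P e.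

Definition logical_channel (G : {set A}) (P : A -> R) (e : A) : R :=
  (#|G|%:R)^-1 * \sum_(s in G) P (gmul e s).

Definition local_family (Gamma : {set {set 'I_n}}) (Pg : {set 'I_n} -> A -> R)
  : Prop :=
  forall g, g \in Gamma ->
    is_prob (Pg g) /\ (forall e, ~~ (supp e \subset g) -> Pg g e = 0).

Definition correctable_channel (G M : {set A}) (Gamma : {set {set 'I_n}})
  (Pg : {set 'I_n} -> A -> R) : Prop :=
  (forall g1 g2, g1 \in Gamma -> g2 \in Gamma ->
     correctable_region G M (g1 :|: g2)) /\
  (forall a, 0 < moment (conv_family Gamma Pg) a).

End Dist.
End Ops.

From mathcomp Require Import all_boot all_order all_algebra ring.
Set Implicit Arguments. Unset Strict Implicit. Unset Printing Implicit Defensive.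
Import Order.TTheory GRing.Theory Num.Theory.
Local Open Scope ring_scope.

(* By Fourier inversion on A, the logical channel only depends on the moments
   E(a) for a in G^perp, since the character sum of a over G vanishes
   elsewhere.  The moment E of P factors as the product of the moments E_gamma
   of the P_gamma, and E_gamma(b) only depends on the restriction of b to
   gamma.  Fix one representative e for each syndrome class (with respect to M)
   of the errors supported in some gamma, and let
   c(a, s) = sum_e <a,e> <s,e> (this is [coeff a s]).  Two such errors with the same syndrome differ
   by an element of G, by correctability of gamma1 u gamma2, so for a in
   G^perp the sum of c(a, s) over the s in M with a given restriction j to
   gamma is |M| [a|gamma = j].  Grouping the factors according to their
   restriction gives E_gamma(a)^|M| = prod_(s in M) E_gamma(s)^c(a, s), hence
   E(a)^|M| = prod_(s in M) E(s)^c(a, s), and positivity of E recovers E(a)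
   from the moments on M. *)

Lemma fac_antiC b (x y : fac b) : fac_anti x y = fac_anti y x.
Proof. by case: b x y => [[[] []] [[] []] | [] []]. Qed.

Lemma fac_antiMl b (x y z : fac b) :
  fac_anti (fac_mul x y) z = fac_anti x z (+) fac_anti y z.
Proof. by case: b x y z => [[[] []] [[] []] [[] []] | [] [] []]. Qed.

Lemma fac_anti1r b (x : fac b) : fac_anti x (fac_one b) = false.
Proof. by case: b x => [[[] []] | []]. Qed.

Lemma fac_mulC b (x y : fac b) : fac_mul x y = fac_mul y x.
Proof. by case: b x y => [[[] []] [[] []] | [] []]. Qed.

Lemma fac_mulA b (x y z : fac b) :
  fac_mul x (fac_mul y z) = fac_mul (fac_mul x y) z.
Proof. by case: b x y z => [[[] []] [[] []] [[] []] | [] [] []]. Qed.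

Lemma fac_mul1 b (x : fac b) : fac_mul x (fac_one b) = x.
Proof. by case: b x => [[[] []] | []]. Qed.

Lemma fac_mulxx b (x : fac b) : fac_mul x x = fac_one b.
Proof. by case: b x => [[[] []] | []]. Qed.

Lemma fac_anti_witness b (x : fac b) : x != fac_one b -> exists y, fac_anti x y.
Proof.
case: b x => [[[] []] | []] //= _;
  first [by exists (false, true) | by exists (true, false) | by exists true].
Qed.

Section ErrorGroup.
Variables (n : nat) (kind : 'I_n -> bool).
Local Notation A := (grp kind).
Local Notation one := (gone kind).
Implicit Types (a b c d e x y : A) (g : {set 'I_n}) (H : {set A}).

Lemma gmulC a b : gmul a b = gmul b a.
Proof. by apply/ffunP => i; rewrite !ffunE fac_mulC. Qed.

Lemma gmulA a b c : gmul a (gmul b c) = gmul (gmul a b) c.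
Proof. by apply/ffunP => i; rewrite !ffunE fac_mulA. Qed.

Lemma gmul1 a : gmul a one = a.
Proof. by apply/ffunP => i; rewrite !ffunE fac_mul1. Qed.

Lemma gmulxx a : gmul a a = one.
Proof. by apply/ffunP => i; rewrite !ffunE fac_mulxx. Qed.

Lemma gmulK b : involutive (fun a => gmul a b).
Proof. by move=> a; rewrite -gmulA gmulxx gmul1. Qed.

Lemma gmul_eq1 a b : (gmul a b == one) = (a == b).
Proof.
by apply/eqP/eqP => [ab1|->]; rewrite ?gmulxx // -[a](gmulK b) ab1 gmulC gmul1.
Qed.

Lemma gantiC a b : ganti a b = ganti b a.
Proof. by apply: eq_bigr => i _; rewrite fac_antiC. Qed.

Lemma gantiMl a b c : ganti (gmul a b) c = ganti a c (+) ganti b c.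
Proof.
by rewrite /ganti -big_split; apply: eq_bigr => i _; rewrite ffunE fac_antiMl.
Qed.

Lemma gantiMr a b c : ganti c (gmul a b) = ganti c a (+) ganti c b.
Proof. by rewrite gantiC gantiMl !(gantiC c). Qed.

Lemma ganti1r a : ganti a one = false.
Proof. by rewrite /ganti big1 // => i _; rewrite ffunE fac_anti1r. Qed.

Lemma subgroupMr H b : is_subgroup H -> b \in H ->
  forall a, (gmul a b \in H) = (a \in H).
Proof.
move=> [_ HM] bH a; apply/idP/idP => [abH|aH]; last exact: HM.
by rewrite -(gmulK b a); apply: HM.
Qed.

Definition restrict g a : A :=
  [ffun i => if i \in g then a i else fac_one (kind i)].

Definition supported g : {set A} := [set d | supp d \subset g].

Lemma restrictM g a b :
  restrict g (gmul a b) = gmul (restrict g a) (restrict g b).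
Proof. by apply/ffunP => i; rewrite !ffunE; case: ifP => _; rewrite ?fac_mul1. Qed.

Lemma restrictK g a : restrict g (restrict g a) = restrict g a.
Proof.
by apply/ffunP => i; rewrite !ffunE; case: (i \in g) => //; rewrite ffunE.
Qed.

Lemma restrictT a : restrict setT a = a.
Proof. by apply/ffunP => i; rewrite ffunE inE. Qed.

Lemma supportedT : supported setT = setT.
Proof. by apply/setP => d; rewrite !inE subsetT. Qed.

Lemma supp_gmul a b : supp (gmul a b) \subset supp a :|: supp b.
Proof.
apply/subsetP => i; rewrite !inE ffunE; apply: contraR.
by rewrite negb_or !negbK => /andP[/eqP-> /eqP->]; rewrite fac_mul1.
Qed.

Lemma supported_subgroup g : is_subgroup (supported g).
Proof.
split=> [|a b]; first by rewrite inE; apply/subsetP => i; rewrite inE ffunE eqxx.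
rewrite !inE => ag bg; apply: subset_trans (supp_gmul a b) _.
by rewrite subUset ag bg.
Qed.

Lemma ganti_restrict g a e :
  e \in supported g -> ganti (restrict g a) e = ganti a e.
Proof.
rewrite inE => /subsetP eg; apply: eq_bigr => i _.
rewrite ffunE; case: ifP => // ig.
have : i \notin supp e by apply: contraFN ig; apply: eg.
by rewrite inE negbK => /eqP->; rewrite !fac_anti1r.
Qed.

Lemma perp_supported g a : (a \in perp (supported g)) = (restrict g a == one).
Proof.
apply/idP/eqP => [|a1]; last first.
  rewrite inE; apply/forall_inP => e eg.
  by rewrite -(ganti_restrict a eg) a1 gantiC ganti1r.
rewrite inE => /forall_inP aperp; apply/ffunP => i; rewrite ffunE [one i]ffunE.
case: ifP => // ig; apply/eqP/negPn/negP => /fac_anti_witness ai_anti.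
pose w : A := [ffun j => odflt (fac_one (kind j)) [pick y | fac_anti (a j) y]].
have aw : fac_anti (a i) (w i).
  by rewrite ffunE; case: pickP => [//|none]; case: ai_anti => y; rewrite none.
have eg : restrict [set i] w \in supported g.
  rewrite inE; apply/subsetP => j; rewrite !inE ffunE inE.
  by have [->|_] := eqVneq j i; rewrite ?eqxx.
move/negP: (aperp _ eg); apply; rewrite /ganti (bigD1 i) //= big1 ?addbF.
  by rewrite ffunE set11.
by move=> j /negbTE ji; rewrite ffunE inE ji fac_anti1r.
Qed.

End ErrorGroup.

Section Characters.
Variables (n : nat) (kind : 'I_n -> bool) (R : numDomainType).
Local Notation A := (grp kind).
Local Notation one := (gone kind).
Local Notation chi := (bichar R).
Implicit Types (a b c d e x y : A) (g : {set 'I_n}) (H : {set A}).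

Lemma bicharC a b : chi a b = chi b a.
Proof. by rewrite /bichar gantiC. Qed.

Lemma bicharMl a b c : chi (gmul a b) c = chi a c * chi b c.
Proof. by rewrite /bichar gantiMl signr_addb. Qed.

Lemma bicharMr a b c : chi c (gmul a b) = chi c a * chi c b.
Proof. by rewrite /bichar gantiMr signr_addb. Qed.

Lemma bichar1r a : chi a one = 1.
Proof. by rewrite /bichar ganti1r. Qed.

Lemma sum_bichar_subgroup H x : is_subgroup H ->
  \sum_(h in H) chi x h = #|H|%:R * (x \in perp H)%:R.
Proof.
move=> Hsub; have [xH|] := boolP (x \in perp H).
  rewrite mulr1 -sumr_const; apply: eq_bigr => h hH.
  by move: xH; rewrite inE => /forall_inP/(_ h hH)/negbTE; rewrite /bichar => ->.
rewrite mulr0 inE => /forall_inPn[h0 h0H /negPn xh0].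
have flip : \sum_(h in H) chi x h = - \sum_(h in H) chi x h.
  rewrite {1}(reindex_inj (can_inj (gmulK h0))) /= -sumrN.
  apply: eq_big => h; first by rewrite (subgroupMr Hsub h0H).
  by move=> _; rewrite bicharMr {2}/bichar xh0 mulrN1.
by apply/eqP; rewrite -[_ == 0](mulrn_eq0 _ 2) mulr2n {1}flip addNr.
Qed.

Lemma sum_bichar_supported g x :
  \sum_(d in supported kind g) chi x d
    = #|supported kind g|%:R * (restrict g x == one)%:R.
Proof.
by rewrite sum_bichar_subgroup ?perp_supported //; apply: supported_subgroup.
Qed.

Lemma sum_bichar x : \sum_d chi x d = #|A|%:R * (x == one)%:R.
Proof.
rewrite -cardsT -(supportedT kind) -{2}(restrictT x) -sum_bichar_supported.
rewrite supportedT.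
by apply: eq_bigl => d; rewrite inE.
Qed.

End Characters.

Section Moments.
Variables (n : nat) (kind : 'I_n -> bool) (R : realFieldType).
Local Notation A := (grp kind).
Local Notation one := (gone kind).
Local Notation chi := (bichar R).
Implicit Types (a b e : A) (g : {set 'I_n}) (P Q : A -> R).

Lemma moment_conv P Q a : moment (conv P Q) a = moment P a * moment Q a.
Proof.
rewrite /moment /conv mulr_suml.
under eq_bigr do rewrite mulr_sumr.
rewrite exchange_big; apply: eq_bigr => b _ /=.
rewrite mulr_sumr [LHS](reindex_inj (can_inj (gmulK b))) /=.
by apply: eq_bigr => e _; rewrite /ginv gmulK bicharMr; ring.
Qed.

Lemma moment_delta1 a : moment (@delta1 _ kind R) a = 1.
Proof.
rewrite /moment (bigD1 one) //= big1 ?addr0 /delta1 ?eqxx ?mulr1 ?bichar1r //.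
by move=> e /negbTE ->; rewrite mulr0.
Qed.

Lemma moment_conv_family (Gamma : {set {set 'I_n}}) (Pg : {set 'I_n} -> A -> R) a :
  moment (conv_family Gamma Pg) a = \prod_(g in Gamma) moment (Pg g) a.
Proof.
exact: (big_morph (fun P => moment P a) (fun P Q => moment_conv P Q a)
                  (moment_delta1 a)).
Qed.

Lemma moment_restrict P g b : (forall e, ~~ (supp e \subset g) -> P e = 0) ->
  moment P (restrict g b) = moment P b.
Proof.
move=> P_supp; apply: eq_bigr => e _.
have [eg|eNg] := boolP (supp e \subset g); last by rewrite P_supp ?mulr0.
by rewrite /bichar ganti_restrict // inE.
Qed.

Lemma moment_inversion P b : #|A|%:R * P b = \sum_a chi a b * moment P a.
Proof.
have orth e : \sum_a chi a b * (chi a e * P e) = #|A|%:R * (b == e)%:R * P e.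
  under eq_bigr do rewrite mulrA -bicharMr bicharC.
  by rewrite -mulr_suml sum_bichar gmul_eq1.
under eq_bigr do rewrite mulr_sumr.
rewrite exchange_big /= (eq_bigr _ (fun e _ => orth e)) (bigD1 b) //= eqxx mulr1.
by rewrite big1 ?addr0 // => e /negbTE; rewrite eq_sym => ->; rewrite mulr0 mul0r.
Qed.

Lemma logical_channel_perp_moments G P Q : is_subgroup G ->
  {in perp G, moment P =1 moment Q} -> logical_channel G P =1 logical_channel G Q.
Proof.
move=> Gsub PQ e; congr (_ * _).
have fourier P' : #|A|%:R * \sum_(s in G) P' (gmul e s)
    = \sum_a moment P' a * chi a e * (#|G|%:R * (a \in perp G)%:R).
  rewrite mulr_sumr; under eq_bigr do rewrite moment_inversion.
  rewrite exchange_big; apply: eq_bigr => a _ /=.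
  rewrite -sum_bichar_subgroup // mulr_sumr; apply: eq_bigr => s _.
  by rewrite bicharMr mulrC mulrA.
have A_neq0 : #|A|%:R != 0 :> R.
  by rewrite pnatr_eq0 -lt0n; apply/card_gt0P; exists one.
apply: (mulfI A_neq0); rewrite !fourier; apply: eq_bigr => a _.
by have [/PQ->|] := boolP (a \in perp G); rewrite ?mulr0.
Qed.

End Moments.

Section Reconstruction.
Variables (n : nat) (kind : 'I_n -> bool) (G M : {set grp kind}).
Variable Gamma : {set {set 'I_n}}.
Hypothesis M_subgroup : is_subgroup M.
Hypothesis Gamma_correctable : forall g1 g2, g1 \in Gamma -> g2 \in Gamma ->
  correctable_region G M (g1 :|: g2).
Local Notation A := (grp kind).
Implicit Types (a b d e s : A) (g : {set 'I_n}).

Definition syndrome d : {set A} := [set s in M | ganti d s].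

Lemma syndrome_eq d e : (syndrome d == syndrome e) = (gmul d e \in perp M).
Proof.
rewrite inE; apply/eqP/forall_inP => [sde s sM | de].
  by move/setP/(_ s): sde; rewrite !inE sM /= gantiMl negb_add => ->.
apply/setP => s; rewrite !inE; case sM: (s \in M) => //=.
by apply/eqP; rewrite -negb_add -gantiMl de.
Qed.

Definition local_errors : {set A} := \bigcup_(g in Gamma) supported kind g.

Definition syndrome_reps : {set A} :=
  transversal (preim_partition syndrome local_errors) local_errors.

Lemma syndrome_reps_fibre d : d \in local_errors ->
  exists r, forall e,
    (e \in syndrome_reps) && (syndrome d == syndrome e) = (e == r).
Proof.
move=> dS; have partP := preim_partitionP syndrome local_errors.
have trP := transversalP partP; set P := preim_partition _ _ in partP trP.
have PdP : pblock P d \in P by rewrite pblock_mem ?(cover_partition partP).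
exists (transversal_repr d syndrome_reps (pblock P d)) => e.
rewrite -in_set1 -(setI_transversal_pblock trP d PdP) inE.
apply: andb_id2l => eX.
rewrite (pblock_equivalence_partition (D := local_errors)) //.
  by split=> // /eqP->.
exact: subsetP (transversal_sub trP) e eX.
Qed.

Lemma ganti_syndrome_eq a d r : a \in perp G ->
  d \in local_errors -> r \in local_errors -> syndrome r = syndrome d ->
  ganti a r = ganti a d.
Proof.
move=> aG /bigcupP[g1 g1G] + /bigcupP[g2 g2G] + /eqP.
rewrite !inE syndrome_eq => dg1 rg2 rd.
have rdG : gmul r d \in G.
  apply: (Gamma_correctable g2G g1G rd); apply: subset_trans (supp_gmul r d) _.
  exact: setUSS.
by move: aG; rewrite inE => /forall_inP/(_ _ rdG); rewrite gantiMr negb_add => /eqP.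
Qed.

Lemma sum_syndrome_reps (R : nzRingType) a d :
  a \in perp G -> d \in local_errors ->
  \sum_(e in syndrome_reps) bichar R a e * (syndrome d == syndrome e)%:R
    = bichar R a d.
Proof.
move=> aG dS; have [r fibre] := syndrome_reps_fibre dS.
have /andP[rX /eqP rd] : (r \in syndrome_reps) && (syndrome d == syndrome r).
  by rewrite fibre.
under eq_bigr do rewrite mulr_natr mulrb.
rewrite -big_mkcondr (eq_bigl _ _ fibre) big_pred1_eq /bichar.
rewrite (ganti_syndrome_eq aG dS) //.
exact: subsetP (transversal_sub (transversalP (preim_partitionP _ _))) r rX.
Qed.

Lemma sum_bichar_syndrome (R : numDomainType) d e :
  \sum_(s in M) bichar R s d * bichar R s e
    = #|M|%:R * (syndrome d == syndrome e)%:R.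
Proof.
under eq_bigr do rewrite -bicharMr bicharC.
by rewrite sum_bichar_subgroup // syndrome_eq.
Qed.

Definition coeff a s : int :=
  \sum_(e in syndrome_reps) bichar int a e * bichar int s e.

Local Notation chi := (bichar int).

Lemma sum_coeff_restrict g a y : g \in Gamma -> a \in perp G ->
  \sum_(s in M | restrict g s == restrict g y) coeff a s
    = #|M|%:R * (restrict g a == restrict g y)%:R.
Proof.
move=> gGamma aG; set N : int := #|supported kind g|%:R.
have N_neq0 : N != 0.
  rewrite pnatr_eq0 -lt0n; apply/card_gt0P.
  by exists (gone kind); case: (supported_subgroup kind g).
have indicator x : (restrict g x == restrict g y)%:R * N
                   = \sum_(d in supported kind g) chi x d * chi y d.
  under eq_bigr do rewrite -bicharMl.
  by rewrite sum_bichar_supported restrictM gmul_eq1 mulrC.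
(* Expand the indicator of [restrict g s = restrict g y] as a character sum
   over the errors supported in g, and sum over M first. *)
apply: (mulIf N_neq0); rewrite big_mkcondr mulr_suml /=.
transitivity (\sum_(s in M)
                (\sum_(d in supported kind g) chi s d * chi y d) * coeff a s).
  apply: eq_bigr => s _; rewrite -indicator mulrAC.
  by case: ifP; rewrite ?mul0r ?mul1r.
transitivity (\sum_(d in supported kind g) chi y d *
                \sum_(e in syndrome_reps)
                  chi a e * \sum_(s in M) chi s d * chi s e).
  under eq_bigr do rewrite mulr_suml.
  rewrite exchange_big; apply: eq_bigr => d _ /=.
  rewrite /coeff; under eq_bigr do rewrite mulr_sumr.
  rewrite exchange_big mulr_sumr; apply: eq_bigr => e _ /=.
  by rewrite !mulr_sumr; apply: eq_bigr => s _; ring.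
rewrite (eq_bigr (fun d => #|M|%:R * (chi a d * chi y d))) => [|d dg].
  by rewrite -mulr_sumr -indicator mulrA.
under eq_bigr do rewrite sum_bichar_syndrome mulrCA.
rewrite -mulr_sumr sum_syndrome_reps //; last by apply/bigcupP; exists g.
by rewrite mulrCA [chi y d * _]mulrC.
Qed.

Lemma sum_coeff_fibre g a j : g \in Gamma -> a \in perp G ->
  \sum_(s in M | restrict g s == j) coeff a s = (#|M| * (restrict g a == j))%N.
Proof.
move=> gGamma aG; have [jK|jNK] := eqVneq (restrict g j) j.
  by rewrite -jK sum_coeff_restrict // !natz PoszM.
have outside b : (restrict g b == j) = false.
  by apply: contraNF jNK => /eqP<-; rewrite restrictK.
by rewrite big_pred0 ?outside ?muln0 // => s; rewrite outside andbF.
Qed.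

Lemma prod_exprz_coeff (R : fieldType) (F : A -> R) g a :
  g \in Gamma -> a \in perp G ->
  (forall b, F (restrict g b) = F b) -> (forall b, F b != 0) ->
  F a ^+ #|M| = \prod_(s in M) F s ^ coeff a s.
Proof.
move=> gGamma aG Frestrict F_neq0.
rewrite (partition_big (restrict g) predT) //=.
transitivity (\prod_j F j ^+ (#|M| * (restrict g a == j))).
  rewrite (bigD1 (restrict g a)) //= eqxx muln1 Frestrict big1 ?mulr1 // => j.
  by rewrite eq_sym => /negbTE->; rewrite muln0.
apply: eq_bigr => j _; rewrite exprnP -sum_coeff_fibre //.
rewrite (big_morph (fun z => F j ^ z) (fun m k => expfzDr m k (F_neq0 j))
                   (expr0z _)).
by apply: eq_bigr => s /andP[_ /eqP<-]; rewrite Frestrict.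
Qed.

Lemma moment_exprz_coeff (R : realFieldType) (Pg : {set 'I_n} -> A -> R) a :
  local_family Gamma Pg -> (forall b, moment (conv_family Gamma Pg) b != 0) ->
  a \in perp G ->
  moment (conv_family Gamma Pg) a ^+ #|M|
    = \prod_(s in M) moment (conv_family Gamma Pg) s ^ coeff a s.
Proof.
move=> Pg_local E_neq0 aG; rewrite moment_conv_family -prodrXl.
rewrite (eq_bigr (fun g => \prod_(s in M) moment (Pg g) s ^ coeff a s))
  => [|g gGamma].
  rewrite exchange_big; apply: eq_bigr => s _ /=; rewrite moment_conv_family.
  by rewrite (big_morph (fun x => x ^ coeff a s) (fun x y => expfzMl x y _)
                       (exp1rz _ _)).
apply: (prod_exprz_coeff (g := g)) => // b.
  exact/moment_restrict/(proj2 (Pg_local g gGamma)).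
by move: (E_neq0 b); rewrite moment_conv_family => /prodf_neq0; apply.
Qed.

End Reconstruction.

Theorem theorem2 (R : realFieldType) (n : nat) (kind : 'I_n -> bool)
  (G M : {set grp kind}) (Gamma : {set {set 'I_n}})
  (Pg1 Pg2 : {set 'I_n} -> grp kind -> R) :
  is_subgroup G -> is_subgroup M -> G \subset perp M ->
  local_family Gamma Pg1 -> correctable_channel G M Gamma Pg1 ->
  local_family Gamma Pg2 -> correctable_channel G M Gamma Pg2 ->
  (forall s, s \in M ->
     moment (conv_family Gamma Pg1) s = moment (conv_family Gamma Pg2) s) ->
  forall e, logical_channel G (conv_family Gamma Pg1) e
          = logical_channel G (conv_family Gamma Pg2) e.
Proof.
move=> G_subgroup M_subgroup _ Pg1_local [Gamma_correctable E1_gt0]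
  Pg2_local [_ E2_gt0] E12_M.
apply: logical_channel_perp_moments => // a aG.
have E1_neq0 b := lt0r_neq0 (E1_gt0 b); have E2_neq0 b := lt0r_neq0 (E2_gt0 b).
have : moment (conv_family Gamma Pg1) a ^+ #|M|
       = moment (conv_family Gamma Pg2) a ^+ #|M|.
  rewrite !(moment_exprz_coeff M_subgroup Gamma_correctable) //.
  by apply: eq_bigr => s sM; rewrite E12_M.
move/eqP; rewrite eqrXn2 ?ltW //; first by move/eqP.
by apply/card_gt0P; exists (gone kind); case: M_subgroup.
Qed.
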